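(* The system $\mathrm{CLC}_s$ is strongly normalizing: there is no infinite sequence $t_0\to_s t_1\to_s t_2\to_s\cdots$ of $l$-terms.
   Context: $i$-terms (unlabelled terms) are built from variables and the constants $C,T,F,K,S$ by binary application (left-associative). $\mathrm{CLC}$ is the conditional system with rules $C\,T\,x\,y\to x$; $C\,F\,x\,y\to y$; $C\,z\,x\,y\to x \Leftarrow x=y$; $K\,x\,y\to x$; $S\,x\,y\,z\to x\,z\,(y\,z)$, where $=$ is convertibility in $\mathrm{CLC}$ itself (defined by levels: $R_0$ with empty condition, $R_{n+1}$ with $=$ the conversion of $\to_{R_n}$, $\to_{\mathrm{CLC}}=\bigcup_n\to_{R_n}$); $=_{\mathrm{CLC}}$ is conversion in $\mathrm{CLC}$. Labelled constants: $C_1,C_2,T_1,F_1,K_1$ and $S^{n_0,\dots,n_k}$ for all $k\ge1$, $n_0,\dots,n_k\ge1$. $l$-terms: every $i$-term; every labelled constant; $t_1t_2$ for $l$-terms $t_1,t_2$; and $\langle t_1,\dots,t_n\rangle$ for $l$-terms $t_1,\dots,t_n$ with $n\ge2$ (a tuple of size $n$). Convention: $\langle t\rangle\equiv t$ (not a tuple). Erasures: an $i$-term is an erasure of itself; $C$ is an erasure of $C_1,C_2$; $T$ of $T_1$; $F$ of $F_1$; $K$ of $K_1$; $S$ of each $S^{n_0,\dots,n_k}$; if $q_1,q_2$ are erasures of $t_1,t_2$ then $q_1q_2$ is an erasure of $t_1t_2$; if $q_i$ is an erasure of $t_i$ for some $i$ then $q_i$ is an erasure of $\langle t_1,\dots,t_n\rangle$.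 The leftmost erasure $\lfloor t\rfloor$ always chooses $i=1$ for tuples. $\mathrm{CLC}_s$ is the rewriting system on $l$-terms (variables instantiated by arbitrary $l$-terms, contraction allowed in any context, including inside tuple components) with rules: $C_1T_1xy\to x$; $C_1F_1xy\to y$; $C_2zxy\to x\Leftarrow\lfloor x\rfloor=_{\mathrm{CLC}}\lfloor y\rfloor$; $C_2Txy\to x$; $C_2Fxy\to y$; $C_2T_1xy\to x$; $C_2F_1xy\to y$; $K_1xy\to x$; and, for each $S^{n_0,\dots,n_k}$, $S^{n_0,\dots,n_k}\,x\,\langle y_1,\dots,y_k\rangle\,\langle z_{0,1},\dots,z_{0,n_0},z_{1,1},\dots,z_{1,n_1},\dots,z_{k,1},\dots,z_{k,n_k}\rangle \to x\,\langle z_{0,1},\dots,z_{0,n_0}\rangle\,\langle y_1\langle z_{1,1},\dots,z_{1,n_1}\rangle,\dots,y_k\langle z_{k,1},\dots,z_{k,n_k}\rangle\rangle$ under the condition that $\lfloor z_{i,j}\rfloor=_{\mathrm{CLC}}\lfloor z_{i',j'}\rfloor$ for all index pairs and $\lfloor y_i\rfloor=_{\mathrm{CLC}}\lfloor y_j\rfloor$ for all $i,j$. One-step contraction in $\mathrm{CLC}_s$ is written $\to_s$. *)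

From Stdlib Require Import List Arith Relations.
Import ListNotations.

Inductive iterm : Type :=
| IVar (n : nat)
| IC | IT | IF | IK | IS
| IApp (t1 t2 : iterm).

(** One-step CLC rewriting, where [E] interprets the condition [x = y]
    of the conditional rule  C z x y -> x <= x = y. Closed under contexts. *)
Inductive clc_step (E : iterm -> iterm -> Prop) : iterm -> iterm -> Prop :=
| clc_CT : forall x y, clc_step E (IApp (IApp (IApp IC IT) x) y) x
| clc_CF : forall x y, clc_step E (IApp (IApp (IApp IC IF) x) y) y
| clc_Cz : forall z x y, E x y -> clc_step E (IApp (IApp (IApp IC z) x) y) x
| clc_K  : forall x y, clc_step E (IApp (IApp IK x) y) x
| clc_S  : forall x y z,
    clc_step E (IApp (IApp (IApp IS x) y) z) (IApp (IApp x z) (IApp y z))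
| clc_appL : forall t t' u, clc_step E t t' -> clc_step E (IApp t u) (IApp t' u)
| clc_appR : forall t u u', clc_step E u u' -> clc_step E (IApp t u) (IApp t u').

(** Levels: R_0 has the conditional rule with an empty (never satisfied)
    condition; R_{n+1} uses the conversion of ->_{R_n} as condition. *)
Fixpoint clc_level (n : nat) : iterm -> iterm -> Prop :=
  match n with
  | 0 => clc_step (fun _ _ => False)
  | S m => clc_step (clos_refl_sym_trans iterm (clc_level m))
  end.

Definition clc_red (t u : iterm) : Prop := exists n, clc_level n t u.

Definition clc_conv : iterm -> iterm -> Prop := clos_refl_sym_trans iterm clc_red.

Inductive lterm : Type :=
| LVar (n : nat)
| LC | LT | LF | LK | LS
| LC1 | LC2 | LT1 | LF1 | LK1
| LSl (ns : list nat)                  (* S^{n_0,...,n_k}, ns = [n_0;...;n_k] *)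
| LApp (t1 t2 : lterm)
| LTup (ts : list lterm).

Inductive lwf : lterm -> Prop :=
| lwf_var : forall n, lwf (LVar n)
| lwf_C : lwf LC | lwf_T : lwf LT | lwf_F : lwf LF | lwf_K : lwf LK | lwf_S : lwf LS
| lwf_C1 : lwf LC1 | lwf_C2 : lwf LC2 | lwf_T1 : lwf LT1 | lwf_F1 : lwf LF1
| lwf_K1 : lwf LK1
| lwf_Sl : forall ns, 2 <= length ns -> Forall (fun n => 1 <= n) ns -> lwf (LSl ns)
| lwf_app : forall t u, lwf t -> lwf u -> lwf (LApp t u)
| lwf_tup : forall ts, 2 <= length ts -> Forall lwf ts -> lwf (LTup ts).

Definition tup (ts : list lterm) : lterm :=
  match ts with
  | [t] => t
  | _ => LTup ts
  end.

Fixpoint lerase (t : lterm) : iterm :=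
  match t with
  | LVar n => IVar n
  | LC | LC1 | LC2 => IC
  | LT | LT1 => IT
  | LF | LF1 => IF
  | LK | LK1 => IK
  | LS | LSl _ => IS
  | LApp t1 t2 => IApp (lerase t1) (lerase t2)
  | LTup ts => match ts with
               | t1 :: _ => lerase t1
               | [] => IVar 0 (* never occurs for well-formed terms *)
               end
  end.

Definition econv (t u : lterm) : Prop := clc_conv (lerase t) (lerase u).

Definition all_econv (l : list lterm) : Prop :=
  forall a b, In a l -> In b l -> econv a b.

Definition app3 (h a b c : lterm) : lterm := LApp (LApp (LApp h a) b) c.

(** One-step contraction ->_s of CLC_s. In the S-rule, the z's are split into
    blocks z0 (of size n_0) and zrest = [block_1; ...; block_k]. *)
Inductive s_step : lterm -> lterm -> Prop :=
| s_C1T1 : forall x y, s_step (app3 LC1 LT1 x y) x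
| s_C1F1 : forall x y, s_step (app3 LC1 LF1 x y) y
| s_C2z  : forall z x y, econv x y -> s_step (app3 LC2 z x y) x
| s_C2T  : forall x y, s_step (app3 LC2 LT x y) x
| s_C2F  : forall x y, s_step (app3 LC2 LF x y) y
| s_C2T1 : forall x y, s_step (app3 LC2 LT1 x y) x
| s_C2F1 : forall x y, s_step (app3 LC2 LF1 x y) y
| s_K1   : forall x y, s_step (LApp (LApp LK1 x) y) x
| s_Sl   : forall (x : lterm) (ys : list lterm) (z0 : list lterm)
                  (zrest : list (list lterm)),
    zrest <> [] ->
    length ys = length zrest ->
    Forall (fun b => b <> []) (z0 :: zrest) ->
    all_econv (concat (z0 :: zrest)) ->
    all_econv ys ->
    s_step (app3 (LSl (map (@length lterm) (z0 :: zrest))) x (tup ys)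
                 (tup (concat (z0 :: zrest))))
           (LApp (LApp x (tup z0))
                 (tup (map (fun p => LApp (fst p) (tup (snd p))) (combine ys zrest))))
| s_appL : forall t t' u, s_step t t' -> s_step (LApp t u) (LApp t' u)
| s_appR : forall t u u', s_step u u' -> s_step (LApp t u) (LApp t u')
| s_tup  : forall l1 t t' l2, s_step t t' ->
    s_step (LTup (l1 ++ t :: l2)) (LTup (l1 ++ t' :: l2)).

(** In CLC_s no rule duplicates a subterm: the labelled S-rule merely
    distributes the tuple components y_i and z_{i,j} among the new
    applications, and every other rule erases arguments.  So a size measure
    decreases strictly along ->_s, once the label S^{n_0,...,n_k} is given
    enough weight (2(k+1)+1) to pay for the at most 2k+4 application and
    tuple nodes that the S-rule creates (the redex itself loses three
    application nodes besides the label). *)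

From Stdlib Require Import List Arith Relations Lia.
Import ListNotations.

Fixpoint lsize (t : lterm) : nat :=
  match t with
  | LSl ns => 2 * length ns + 1
  | LApp a b => 1 + lsize a + lsize b
  | LTup ts => 1 + list_sum (map lsize ts)
  | _ => 1
  end.

Definition lsize_list (l : list lterm) : nat := list_sum (map lsize l).

Lemma lsize_list_cons (a : lterm) (l : list lterm) :
  lsize_list (a :: l) = lsize a + lsize_list l.
Proof. reflexivity. Qed.

Lemma lsize_list_app (l1 l2 : list lterm) :
  lsize_list (l1 ++ l2) = lsize_list l1 + lsize_list l2.
Proof. unfold lsize_list. now rewrite map_app, list_sum_app. Qed.

Lemma lsize_tup_lower (l : list lterm) : lsize_list l <= lsize (tup l).
Proof. destruct l as [|a [|b l]]; cbn; unfold lsize_list; cbn; lia. Qed.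

Lemma lsize_tup_upper (l : list lterm) : lsize (tup l) <= 1 + lsize_list l.
Proof. destruct l as [|a [|b l]]; cbn; unfold lsize_list; cbn; lia. Qed.

Lemma lsize_distributed_args (ys : list lterm) (zs : list (list lterm)) :
  lsize_list (map (fun p => LApp (fst p) (tup (snd p))) (combine ys zs))
  <= 2 * length ys + lsize_list ys + lsize_list (concat zs).
Proof.
  revert zs; induction ys as [|y ys IH]; intros [|b zs];
    cbn [combine map concat length]; try (cbn; lia).
  rewrite !lsize_list_cons, lsize_list_app.
  pose proof (IH zs); pose proof (lsize_tup_upper b); cbn [lsize fst snd]; lia.
Qed.

(** Every contraction strictly decreases the size; in the S-rule the label
    and the three erased application nodes ([2k+6] in all) outweigh the at
    most [2k+4] nodes created. *)
Lemma s_step_decreases (t u : lterm) : s_step t u -> lsize u < lsize t.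
Proof.
  induction 1; unfold app3; cbn; try lia.
  -
    set (args := map (fun p => LApp (fst p) (tup (snd p))) (combine ys zrest)).
    pose proof (lsize_tup_lower ys).
    pose proof (lsize_tup_lower (concat (z0 :: zrest))).
    pose proof (lsize_tup_upper z0).
    pose proof (lsize_tup_upper args).
    pose proof (lsize_distributed_args ys zrest) as Hargs; fold args in Hargs.
    cbn [concat length] in *; rewrite lsize_list_app in *; rewrite length_map.
    lia.
  -
    fold (lsize_list (l1 ++ t :: l2)) (lsize_list (l1 ++ t' :: l2)).
    rewrite !lsize_list_app, !lsize_list_cons; lia.
Qed.

Lemma no_infinite_chain_of_measure (A : Type) (R : A -> A -> Prop)
    (m : A -> nat) :
  (forall a b, R a b -> m b < m a) ->
  ~ (exists f : nat -> A, forall i, R (f i) (f (S i))).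
Proof.
  intros Hdec [f Hf].
  assert (Hdescent : forall i, m (f i) + i <= m (f 0)).
  { induction i as [|i IH]; [lia|]. specialize (Hdec _ _ (Hf i)); lia. }
  specialize (Hdescent (S (m (f 0)))); lia.
Qed.

Theorem mainTheorem8 :
  ~ (exists f : nat -> lterm,
        (forall i, lwf (f i)) /\ (forall i, s_step (f i) (f (S i)))).
Proof.
  intros [f [_ Hsteps]].
  apply (no_infinite_chain_of_measure lterm s_step lsize s_step_decreases).
  now exists f.
Qed.
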